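(* (Soundness and completeness.) Let $H$ be a Hintikka tree and define, for a sentence $\varphi$ of $L$ of depth $d$, $\mathrm{prove}_H(\varphi) = \mathrm{true}$ if $\sum_{\delta^{(d)} \in \mathrm{dnf}(\varphi)} H(\delta^{(d)}) = 1$ and $\mathrm{prove}_H(\varphi) = \mathrm{false}$ otherwise. (Sound) If $H$ is reasonable, then $\mathrm{prove}_H(\varphi) = \mathrm{true}$ implies that $\varphi$ is logically valid. (Complete) If $H$ is a depth Hintikka tree, then every logically valid sentence $\varphi$ satisfies $\mathrm{prove}_H(\varphi) = \mathrm{true}$.
   Context: $L$ is a first-order language without equality with finitely many predicate symbols and no function or constant symbols (structures with empty domain allowed). For $d \in \mathbb{N}$, $\Delta^{(d)}$ is the finite set of Hintikka constituents of depth $d$ with no free variables ($\Delta^{(0)} = \{\top\}$); distinct constituents of the same depth are mutually exclusive and every sentence $\varphi$ of quantifier depth $d$ is logically equivalent to the disjunction of a set $\mathrm{dnf}(\varphi) \subseteq \Delta^{(d)}$ (its Hintikka distributive normal form); a sentence of depth $d$ is logically valid iff its dnf contains all consistent depth-$d$ constituents. A constituent is consistent iff satisfiable. A fixed decidable criterion of trivial inconsistency is given such that trivially inconsistent constituents are inconsistent. $\mathrm{expand}(1,\delta^{(d)})\subseteq\Delta^{(d+1)}$ denotes the expansions of $\delta^{(d)}$. Refinement tree: on $\Delta = \bigcup_d \Delta^{(d)}$ put an edge from each $\delta^{(d)}$ to each member of $\mathrm{expand}(1,\delta^{(d)})$, keeping a constituent lying in several depth-$d$ expansions as child of only one of them.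 A Hintikka tree is a function $H: \Delta \to [0,1]$ with $H(\delta^{(0)}) = 1$ and $H(\delta) = \sum_{\delta' \text{ child of } \delta} H(\delta')$; it is reasonable if $H(\delta) > 0$ whenever $\delta$ is not trivially inconsistent, and it is a depth Hintikka tree if $H(\delta) = 0$ for every inconsistent $\delta$. *)

From HB Require Import structures.
From mathcomp Require Import all_boot all_order all_algebra.
From mathcomp Require Import reals.
Unset Printing Implicit Defensive.
Import Order.TTheory GRing.Theory Num.Theory.

(** Predicate symbols form a finite type [P]; symbol [p] has arity
    [(ar p).+1] (all arities positive: no 0-ary symbols, so that the unique
    depth-0 constituent without free variables is the empty conjunction T).
    Variables are de Bruijn *levels*: variable [i] denotes the [i]-th
    element of the environment, and a quantifier binds level [size env]. *)
Section Syntax.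
Variables (P : finType) (ar : P -> nat).

Inductive form : Type :=
  | FTop | FBot
  | Atom of P & seq nat
  | Neg of form
  | And of form & form
  | Or of form & form
  | Ex of form
  | All of form.

Fixpoint wf (n : nat) (f : form) : bool :=
  match f with
  | FTop | FBot => true
  | Atom p vs => (size vs == (ar p).+1) && all (fun i => i < n) vs
  | Neg g => wf n g
  | And g h | Or g h => wf n g && wf n h
  | Ex g | All g => wf n.+1 g
  end.

Definition sentence (f : form) : bool := wf 0 f.

Fixpoint qdepth (f : form) : nat :=
  match f with
  | FTop | FBot | Atom _ _ => 0
  | Neg g => qdepth g
  | And g h | Or g h => maxn (qdepth g) (qdepth h)
  | Ex g | All g => (qdepth g).+1
  end.

(** structures (empty domain allowed) *)
Record structure : Type := Structure {
  dom : Type;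
  interp : P -> seq dom -> Prop }.

Fixpoint sat (M : structure) (env : seq (dom M)) (f : form) : Prop :=
  match f with
  | FTop => True
  | FBot => False
  | Atom p vs => interp M p (pmap (onth env) vs)
  | Neg g => ~ sat M env g
  | And g h => sat M env g /\ sat M env h
  | Or g h => sat M env g \/ sat M env h
  | Ex g => exists a : dom M, sat M (rcons env a) g
  | All g => forall a : dom M, sat M (rcons env a) g
  end.

Definition valid (f : form) : Prop := forall M : structure, sat M [::] f.

(** A constituent of depth 0 in n variables is a complete atomic description
    (a sign for each atom); a constituent of depth d+1 in n variables is a
    pair (atomic description, set S of depth-d constituents in n+1 variables),
    standing for  A /\ (/\_{c in S} Ex c) /\ All (\/_{c in S} c). *)
Definition atom (n : nat) : finType := {p : P & (ar p).+1.-tuple 'I_n}.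

Fixpoint ctype (d n : nat) {struct d} : finType :=
  match d with
  | 0 => {ffun atom n -> bool}
  | d'.+1 => ({ffun atom n -> bool} * {set ctype d' n.+1})%type
  end.

Definition bigAnd (s : seq form) : form := foldr And FTop s.
Definition bigOr (s : seq form) : form := foldr Or FBot s.

Definition atom_form n (a : atom n) : form :=
  Atom (tag a) [seq val i | i <- val (tagged a)].

Definition atomic_desc n (f : {ffun atom n -> bool}) : form :=
  bigAnd [seq (if f a then atom_form n a else Neg (atom_form n a)) | a <- enum (atom n)].

Fixpoint cform (d : nat) : forall n, ctype d n -> form :=
  match d return forall n, ctype d n -> form with
  | 0 => fun n c => atomic_desc n c
  | d'.+1 => fun n c =>
      And (atomic_desc n c.1)
        (And (bigAnd [seq Ex (cform d' n.+1 c') | c' <- enum c.2])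
             (All (bigOr [seq cform d' n.+1 c' | c' <- enum c.2])))
  end.

Definition Delta (d : nat) : finType := ctype d 0.

Definition consistent d (c : Delta d) : Prop :=
  exists M : structure, sat M [::] (cform d 0 c).

Fixpoint reduct (d : nat) : forall n, ctype d.+1 n -> ctype d n :=
  match d return forall n, ctype d.+1 n -> ctype d n with
  | 0 => fun n c => c.1
  | d'.+1 => fun n c => (c.1, [set @reduct d' n.+1 c' | c' in c.2])
  end.

Definition expand1 d (c : Delta d) : {set Delta d.+1} :=
  [set c' : Delta d.+1 | reduct d 0 c' == c].

End Syntax.

Arguments FTop {P}. Arguments FBot {P}.
Arguments sat {P} M env f.
Arguments cform {P ar d n} c.
Arguments consistent {P ar d} c.
Arguments expand1 {P ar d} c.
Arguments reduct {P ar d n} c.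


Local Open Scope ring_scope.
Section Trees.
Variables (P : finType) (ar : P -> nat) (R : realType).

Definition hintikka_tree (H : forall d, Delta P ar d -> R) : Prop :=
  [/\ forall d (c : Delta P ar d), 0 <= H d c <= 1,
      forall c : Delta P ar 0, H 0 c = 1 &
      forall d (c : Delta P ar d), H d c = \sum_(c' in expand1 c) H d.+1 c'].

Definition reasonable (triv : forall d, Delta P ar d -> bool)
  (H : forall d, Delta P ar d -> R) : Prop :=
  forall d (c : Delta P ar d), ~~ triv d c -> 0 < H d c.

Definition depth_tree (H : forall d, Delta P ar d -> R) : Prop :=
  forall d (c : Delta P ar d), ~ consistent c -> H d c = 0.

Definition is_dnf (f : form P) (D : {set Delta P ar (qdepth P f)}) : Prop :=
  forall M : structure P,
    sat M [::] f <-> exists2 c, c \in D & sat M [::] (cform c).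

Definition prove (H : forall d, Delta P ar d -> R) (f : form P)
  (D : {set Delta P ar (qdepth P f)}) : bool :=
  \sum_(c in D) H (qdepth P f) c == 1.

End Trees.

Arguments hintikka_tree {P ar R} H.
Arguments reasonable {P ar R} triv H.
Arguments depth_tree {P ar R} H.
Arguments is_dnf {P ar} f D.
Arguments prove {P ar R} H f D.

From Pilot Require Import Defs.
From HB Require Import structures.
From mathcomp Require Import all_boot all_order all_algebra.
From mathcomp Require Import reals.
From mathcomp Require Import boolp.
Import Defs.
Set Implicit Arguments.
Unset Printing Implicit Defensive.
Local Open Scope ring_scope.
Import Order.TTheory GRing.Theory Num.Theory.

(* Constituents of a given depth are mutually exclusive and jointly exhaustive,
   so a sentence with distributive normal form D is valid exactly when D
   contains every consistent constituent.  The depth-d values of a Hintikka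
   tree are nonnegative and sum to 1, so the weight of D is 1 exactly when H
   vanishes outside D.  A reasonable tree vanishes only on trivially
   inconsistent constituents, which gives soundness; a depth tree vanishes on
   all inconsistent ones, which gives completeness. *)

Lemma sumr_in_eq1P (R : numDomainType) (I : finType) (w : I -> R) (D : {pred I}) :
  (forall i, 0 <= w i) -> \sum_i w i = 1 ->
  \sum_(i in D) w i = 1 <-> (forall i, i \notin D -> w i = 0).
Proof.
move=> w_ge0 sum_w.
have sum_out : \sum_(i | i \notin D) w i = 1 - \sum_(i in D) w i.
  by rewrite -sum_w [X in X - _](bigID (mem D)) /= addrC addrK.
split=> [sum_in i iD | w_out].
  apply: (psumr_eq0P (P := fun i => i \notin D) (fun i _ => w_ge0 i)) iD.
  by rewrite sum_out sum_in subrr.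
by rewrite -sum_w [RHS](bigID (mem D)) /= [X in _ + X]big1 ?addr0.
Qed.

Section Constituents.
Variables (P : finType) (ar : P -> nat).

Lemma sat_bigAnd (M : structure P) env (T : eqType) (s : seq T) (g : T -> form P) :
  sat M env (bigAnd P [seq g x | x <- s]) <-> forall x, x \in s -> sat M env (g x).
Proof.
elim: s => [|y s IH] /=; first by split.
split=> [[gy /IH gs] x | gs].
  by rewrite inE => /predU1P [-> | /gs].
split; first by apply: gs; rewrite mem_head.
by apply/IH => x xs; apply: gs; rewrite inE xs orbT.
Qed.

Lemma sat_bigOr (M : structure P) env (T : eqType) (s : seq T) (g : T -> form P) :
  sat M env (bigOr P [seq g x | x <- s]) <-> exists2 x, x \in s & sat M env (g x).
Proof.
elim: s => [|y s IH] /=; first by split=> // [[]].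
split=> [[gy | /IH [x xs gx]] | [x]].
- by exists y; rewrite ?mem_head.
- by exists x; rewrite // inE xs orbT.
by rewrite inE => /predU1P [-> | xs gx]; [left | right; apply/IH; exists x].
Qed.

Definition atomic_type (M : structure P) env n : {ffun atom P ar n -> bool} :=
  [ffun a => `[< sat M env (atom_form P ar n a) >]].

Lemma sat_atomic_type (M : structure P) env n :
  sat M env (atomic_desc P ar n (atomic_type M env n)).
Proof. by apply/sat_bigAnd => a _; rewrite ffunE; case: asboolP. Qed.

Lemma sat_atomic_desc_eq {M : structure P} {env n} {t1 t2 : {ffun atom P ar n -> bool}} :
  sat M env (atomic_desc P ar n t1) -> sat M env (atomic_desc P ar n t2) -> t1 = t2.
Proof.
move=> /sat_bigAnd sat1 /sat_bigAnd sat2; apply/ffunP => a.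
move: (sat1 a (mem_enum _ a)) (sat2 a (mem_enum _ a)).
by case: (t1 a) (t2 a) => [] [].
Qed.

Lemma sat_cform_eq {d n} {M : structure P} {env} {c1 c2 : ctype P ar d n} :
  sat M env (cform c1) -> sat M env (cform c2) -> c1 = c2.
Proof.
elim: d n env c1 c2 => [|d IH] n env; first by move=> c1 c2; apply: sat_atomic_desc_eq.
move=> [t1 S1] [t2 S2] /= [sat_t1 [/sat_bigAnd ex1 all1]] [sat_t2 [/sat_bigAnd ex2 all2]].
(* the witness of [Ex c] for c in T1 satisfies some member of T2 *)
have sub_set (T1 T2 : {set ctype P ar d n.+1}) :
    (forall x, x \in enum T1 -> sat M env (Ex P (cform x))) ->
    (forall a, sat M (rcons env a) (bigOr P [seq cform x | x <- enum T2])) ->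
    {subset T1 <= T2}.
  move=> exT1 allT2 x xT1.
  have [a sat_x] : sat M env (Ex P (cform x)) by apply: exT1; rewrite mem_enum.
  have /sat_bigOr [y yT2 sat_y] := allT2 a.
  by rewrite (IH _ _ _ _ sat_x sat_y) -mem_enum.
rewrite (sat_atomic_desc_eq sat_t1 sat_t2); congr pair.
by apply/setP => x; apply/idP/idP; apply: sub_set.
Qed.

Lemma sat_cform_exists d n (M : structure P) env :
  exists c : ctype P ar d n, sat M env (cform c).
Proof.
elim: d n env => [|d IH] n env; first by exists (atomic_type M env n); apply: sat_atomic_type.
exists (atomic_type M env n,
        [set c : ctype P ar d n.+1 | `[< exists a, sat M (rcons env a) (cform c) >]]).
split; first exact: sat_atomic_type.
split=> [|a /=].
  by apply/sat_bigAnd => c; rewrite mem_enum inE => /asboolP.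
have [c sat_c] := IH n.+1 (rcons env a).
by apply/sat_bigOr; exists c; rewrite // mem_enum inE; apply/asboolP; exists a.
Qed.

Lemma dnf_validP (f : form P) (D : {set Delta P ar (qdepth P f)}) :
  is_dnf f D -> valid P f <-> (forall c, consistent c -> c \in D).
Proof.
move=> dnf_f; split=> [valid_f c [M sat_c] | D_consistent M].
  have /dnf_f [c' c'D sat_c'] := valid_f M.
  by rewrite (sat_cform_eq sat_c sat_c').
apply/dnf_f; have [c sat_c] := sat_cform_exists (qdepth P f) 0 M [::].
by exists c => //; apply: D_consistent; exists M.
Qed.

(* Atoms have positive arity, so there are none in 0 variables. *)
Lemma Delta0_eq (c1 c2 : Delta P ar 0) : c1 = c2.
Proof. by apply/ffunP => [[p t]]; case: (tnth t ord0). Qed.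

End Constituents.

Section HintikkaTrees.
Variables (P : finType) (ar : P -> nat) (R : realType) (H : forall d, Delta P ar d -> R).
Hypothesis tree_H : hintikka_tree H.

Lemma hintikka_tree_ge0 d (c : Delta P ar d) : 0 <= H d c.
Proof. by case: tree_H => H01 _ _; case/andP: (H01 d c). Qed.

Lemma sum_hintikka_tree d : \sum_(c : Delta P ar d) H d c = 1.
Proof.
case: tree_H => _ H_root H_children.
elim: d => [|d IH].
  pose c0 : Delta P ar 0 := [ffun=> true].
  by rewrite (big_pred1 c0) // => c /=; rewrite (Delta0_eq c c0) eqxx.
rewrite (partition_big (@reduct P ar d 0) predT) //= -IH.
by apply: eq_bigr => c _; rewrite H_children; apply: eq_bigl => c'; rewrite inE.
Qed.

Lemma prove_hintikka_treeP (f : form P) (D : {set Delta P ar (qdepth P f)}) :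
  reflect (forall c, c \notin D -> H (qdepth P f) c = 0) (prove H f D).
Proof.
apply: (equivP eqP).
exact: sumr_in_eq1P (@hintikka_tree_ge0 _) (sum_hintikka_tree _).
Qed.

Lemma reasonable_eq0_inconsistent (triv : forall d, Delta P ar d -> bool)
    d (c : Delta P ar d) :
  (forall d (c : Delta P ar d), triv d c -> ~ consistent c) ->
  reasonable triv H -> H d c = 0 -> ~ consistent c.
Proof.
move=> triv_inconsistent reasonable_H Hc0.
apply: triv_inconsistent; apply: contraT => /reasonable_H.
by rewrite Hc0 ltxx.
Qed.

End HintikkaTrees.

Theorem mainTheorem10 (P : finType) (ar : P -> nat)
  (triv : forall d, Delta P ar d -> bool)
  (triv_inconsistent : forall d (c : Delta P ar d), triv d c -> ~ consistent c)
  (R : realType) (H : forall d, Delta P ar d -> R)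
  (hH : hintikka_tree H) :
  (reasonable triv H ->
     forall (f : form P) (D : {set Delta P ar (qdepth P f)}),
       sentence P ar f -> is_dnf f D -> prove H f D -> valid P f)
  /\
  (depth_tree H ->
     forall (f : form P) (D : {set Delta P ar (qdepth P f)}),
       sentence P ar f -> is_dnf f D -> valid P f -> prove H f D).
Proof.
split=> [reasonable_H f D _ dnf_f /(prove_hintikka_treeP hH) H_out
        | depth_H f D _ dnf_f /(dnf_validP dnf_f) D_consistent].
- apply/(dnf_validP dnf_f) => c c_consistent; apply/negPn/negP => cD.
  exact: reasonable_eq0_inconsistent triv_inconsistent reasonable_H (H_out c cD)
    c_consistent.
- apply/(prove_hintikka_treeP hH) => c cD; apply: depth_H => c_consistent.
  by move: cD; rewrite D_consistent.
Qed.
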